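(* For every $\lambda\mu\mathrm{T}$-term $t$: if $t\in\mathrm{SN}_A$, then $t\in\mathrm{SN}_{AB}$.
   Context: The calculus $\lambda\mu\mathrm{T}$ (raw terms). Types: $\rho,\sigma,\tau ::= \mathbb{N} \mid \sigma\to\tau$. Over infinite sets of $\lambda$-variables $x,y,\dots$ and $\mu$-variables $\alpha,\beta,\gamma,\dots$, terms and commands are mutually defined by $t,r,s ::= x \mid \lambda x{:}\rho.r \mid t\,s \mid \mu\alpha{:}\rho.c \mid 0 \mid \mathsf{S}\,t \mid \mathsf{nrec}_\rho\ r\ s\ t$ and $c ::= [\alpha]t$. Terms are considered modulo renaming of bound variables; $FCV(t)$ = free $\mu$-variables; $t[x:=r]$ is capture-avoiding substitution. Numerals: $\underline{n} := \mathsf{S}^n 0$. Contexts: $E ::= \Box \mid E\,t \mid \mathsf{S}\,E \mid \mathsf{nrec}\ r\ s\ E$; $E[u]$ fills the hole with $u$. Structural substitution $t[\alpha:=\beta E]$ is homomorphic on all constructs (capture-avoiding) except $([\alpha]u)[\alpha:=\beta E] := [\beta]E[u[\alpha:=\beta E]]$ (and $([\gamma]u)[\alpha:=\beta E]:=[\gamma](u[\alpha:=\beta E])$ for $\gamma\neq\alpha$). $\to_A$ is the compatible closure (on terms and commands) of: $(\lambda x.t)r\to t[x:=r]$; $\mathsf{S}(\mu\alpha.c)\to\mu\alpha.c[\alpha:=\alpha(\mathsf{S}\,\Box)]$; $(\mu\alpha.c)s\to\mu\alpha.c[\alpha:=\alpha(\Box\,s)]$; $\mathsf{nrec}\ r\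 s\ 0\to r$; $\mathsf{nrec}\ r\ s\ (\mathsf{S}\,\underline{n})\to s\ \underline{n}\ (\mathsf{nrec}\ r\ s\ \underline{n})$; $\mathsf{nrec}\ r\ s\ (\mu\alpha.c)\to\mu\alpha.c[\alpha:=\alpha(\mathsf{nrec}\ r\ s\ \Box)]$. $\to_B$ is the compatible closure of $\mu\alpha.[\alpha]t\to t$ (if $\alpha\notin FCV(t)$) and $[\alpha]\mu\beta.c\to c[\beta:=\alpha\,\Box]$. $\to_{AB}:=\to_A\cup\to_B$. For $X\in\{A,AB\}$, $\mathrm{SN}_X$ is defined inductively: $t\in\mathrm{SN}_X$ whenever every $t'$ with $t\to_X t'$ is in $\mathrm{SN}_X$. *)

(* Raw terms of lambda-mu-T, locally nameless via de Bruijn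
   indices (two separate index spaces: lambda-variables and mu-variables),
   so terms are automatically taken modulo renaming of bound variables. *)
From Stdlib Require Import Arith.

Inductive ty : Type :=
| TN : ty
| TArr : ty -> ty -> ty.

Inductive term : Type :=
| Var : nat -> term
| Lam : ty -> term -> term
| App : term -> term -> term
| Mu : ty -> cmd -> term
| Zero : term
| Suc : term -> term
| Nrec : ty -> term -> term -> term -> term
with cmd : Type :=
| Cmd : nat -> term -> cmd.            (* [alpha] t, alpha a mu-variable *)

Fixpoint numeral (n : nat) : term :=
  match n with 0 => Zero | S n => Suc (numeral n) end.

(* codomain of an arrow type (used to annotate the result of the
   (mu alpha.c) s rule; irrelevant for well-typed terms) *)
Definition cod (r : ty) : ty := match r with TArr _ t => t | TN => TN end.

Fixpoint lift_lam (k : nat) (t : term) : term :=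
  match t with
  | Var x => Var (if x <? k then x else S x)
  | Lam r u => Lam r (lift_lam (S k) u)
  | App u v => App (lift_lam k u) (lift_lam k v)
  | Mu r c => Mu r (lift_lam_c k c)
  | Zero => Zero
  | Suc u => Suc (lift_lam k u)
  | Nrec r a b u => Nrec r (lift_lam k a) (lift_lam k b) (lift_lam k u)
  end
with lift_lam_c (k : nat) (c : cmd) : cmd :=
  match c with Cmd a u => Cmd a (lift_lam k u) end.

Fixpoint lift_mu (k : nat) (t : term) : term :=
  match t with
  | Var x => Var x
  | Lam r u => Lam r (lift_mu k u)
  | App u v => App (lift_mu k u) (lift_mu k v)
  | Mu r c => Mu r (lift_mu_c (S k) c)
  | Zero => Zero
  | Suc u => Suc (lift_mu k u)
  | Nrec r a b u => Nrec r (lift_mu k a) (lift_mu k b) (lift_mu k u)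
  end
with lift_mu_c (k : nat) (c : cmd) : cmd :=
  match c with Cmd a u => Cmd (if a <? k then a else S a) (lift_mu k u) end.

(* capture-avoiding substitution t[x_k := r] (x_k removed, higher indices
   decremented) *)
Fixpoint subst (k : nat) (r : term) (t : term) : term :=
  match t with
  | Var x => if x =? k then r else if k <? x then Var (pred x) else Var x
  | Lam p u => Lam p (subst (S k) (lift_lam 0 r) u)
  | App u v => App (subst k r u) (subst k r v)
  | Mu p c => Mu p (subst_c k (lift_mu 0 r) c)
  | Zero => Zero
  | Suc u => Suc (subst k r u)
  | Nrec p a b u => Nrec p (subst k r a) (subst k r b) (subst k r u)
  end
with subst_c (k : nat) (r : term) (c : cmd) : cmd :=
  match c with Cmd a u => Cmd a (subst k r u) end.

Fixpoint mfree (k : nat) (t : term) : bool :=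
  match t with
  | Var _ => false
  | Lam _ u => mfree k u
  | App u v => mfree k u || mfree k v
  | Mu _ c => mfree_c (S k) c
  | Zero => false
  | Suc u => mfree k u
  | Nrec _ a b u => mfree k a || mfree k b || mfree k u
  end
with mfree_c (k : nat) (c : cmd) : bool :=
  match c with Cmd a u => (a =? k) || mfree k u end.

Inductive ctx : Type :=
| Hole : ctx
| CApp : ctx -> term -> ctx
| CSuc : ctx -> ctx
| CNrec : ty -> term -> term -> ctx -> ctx.

Fixpoint plug (E : ctx) (u : term) : term :=
  match E with
  | Hole => u
  | CApp E t => App (plug E u) t
  | CSuc E => Suc (plug E u)
  | CNrec r a b E => Nrec r a b (plug E u)
  end.

Fixpoint lift_lam_ctx (k : nat) (E : ctx) : ctx :=
  match E with
  | Hole => Hole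
  | CApp E t => CApp (lift_lam_ctx k E) (lift_lam k t)
  | CSuc E => CSuc (lift_lam_ctx k E)
  | CNrec r a b E => CNrec r (lift_lam k a) (lift_lam k b) (lift_lam_ctx k E)
  end.

Fixpoint lift_mu_ctx (k : nat) (E : ctx) : ctx :=
  match E with
  | Hole => Hole
  | CApp E t => CApp (lift_mu_ctx k E) (lift_mu k t)
  | CSuc E => CSuc (lift_mu_ctx k E)
  | CNrec r a b E => CNrec r (lift_mu k a) (lift_mu k b) (lift_mu_ctx k E)
  end.

(* Parallel structural substitution: sigma maps each free mu-variable i to
   a pair (j, E), meaning [i]u is replaced by [j] E[u'] (u' the
   substituted u).  t[alpha := beta E] is the instance sending alpha to
   (beta, E) and every other mu-variable gamma to (gamma, Hole). *)
Definition msig := nat -> nat * ctx.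

Definition up_lam (s : msig) : msig :=
  fun i => let (j, E) := s i in (j, lift_lam_ctx 0 E).

Definition up_mu (s : msig) : msig :=
  fun i => match i with
           | 0 => (0, Hole)
           | S i' => let (j, E) := s i' in (S j, lift_mu_ctx 0 E)
           end.

Fixpoint msub (s : msig) (t : term) : term :=
  match t with
  | Var x => Var x
  | Lam r u => Lam r (msub (up_lam s) u)
  | App u v => App (msub s u) (msub s v)
  | Mu r c => Mu r (msub_c (up_mu s) c)
  | Zero => Zero
  | Suc u => Suc (msub s u)
  | Nrec r a b u => Nrec r (msub s a) (msub s b) (msub s u)
  end
with msub_c (s : msig) (c : cmd) : cmd :=
  match c with Cmd a u => let (b, E) := s a in Cmd b (plug E (msub s u)) end.

(* c[alpha := alpha E] where alpha is the mu-variable bound just outside c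
   (index 0); E is given in the scope inside the binder *)
Definition sig_self (E : ctx) : msig :=
  fun i => match i with 0 => (0, E) | S i' => (S i', Hole) end.

(* c[beta := alpha []] where beta = index 0 is removed and alpha is a
   mu-variable of the outer scope *)
Definition sig_rename (a : nat) : msig :=
  fun i => match i with 0 => (a, Hole) | S i' => (i', Hole) end.

Inductive step (R : term -> term -> Prop) (Rc : cmd -> cmd -> Prop)
  : term -> term -> Prop :=
| st_base : forall t t', R t t' -> step R Rc t t'
| st_lam : forall r u u', step R Rc u u' -> step R Rc (Lam r u) (Lam r u')
| st_appl : forall u u' v, step R Rc u u' -> step R Rc (App u v) (App u' v)
| st_appr : forall u v v', step R Rc v v' -> step R Rc (App u v) (App u v')
| st_mu : forall r c c', cstep R Rc c c' -> step R Rc (Mu r c) (Mu r c')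
| st_suc : forall u u', step R Rc u u' -> step R Rc (Suc u) (Suc u')
| st_nrec1 : forall r a a' b u, step R Rc a a' ->
    step R Rc (Nrec r a b u) (Nrec r a' b u)
| st_nrec2 : forall r a b b' u, step R Rc b b' ->
    step R Rc (Nrec r a b u) (Nrec r a b' u)
| st_nrec3 : forall r a b u u', step R Rc u u' ->
    step R Rc (Nrec r a b u) (Nrec r a b u')
with cstep (R : term -> term -> Prop) (Rc : cmd -> cmd -> Prop)
  : cmd -> cmd -> Prop :=
| cst_base : forall c c', Rc c c' -> cstep R Rc c c'
| cst_cmd : forall a u u', step R Rc u u' -> cstep R Rc (Cmd a u) (Cmd a u').

Inductive ruleA : term -> term -> Prop :=
| rA_beta : forall r t s, ruleA (App (Lam r t) s) (subst 0 s t)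
| rA_suc_mu : forall r c,
    ruleA (Suc (Mu r c)) (Mu r (msub_c (sig_self (CSuc Hole)) c))
| rA_app_mu : forall r c s,
    ruleA (App (Mu r c) s)
          (Mu (cod r) (msub_c (sig_self (CApp Hole (lift_mu 0 s))) c))
| rA_nrec_0 : forall p r s, ruleA (Nrec p r s Zero) r
| rA_nrec_S : forall p r s n,
    ruleA (Nrec p r s (Suc (numeral n)))
          (App (App s (numeral n)) (Nrec p r s (numeral n)))
| rA_nrec_mu : forall p r s q c,
    ruleA (Nrec p r s (Mu q c))
          (Mu p (msub_c (sig_self (CNrec p (lift_mu 0 r) (lift_mu 0 s) Hole)) c)).

Inductive ruleA_c : cmd -> cmd -> Prop := .

Inductive ruleB : term -> term -> Prop :=
| rB_eta : forall r t, mfree 0 t = false ->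
    ruleB (Mu r (Cmd 0 t)) (msub (sig_rename 0) t).

Inductive ruleB_c : cmd -> cmd -> Prop :=
| rB_mumu : forall a r c, ruleB_c (Cmd a (Mu r c)) (msub_c (sig_rename a) c).

Definition redA : term -> term -> Prop := step ruleA ruleA_c.
Definition redB : term -> term -> Prop := step ruleB ruleB_c.
Definition redAB (t t' : term) : Prop := redA t t' \/ redB t t'.

Inductive SN (red : term -> term -> Prop) : term -> Prop :=
| SN_intro : forall t, (forall t', red t t' -> SN red t') -> SN red t.

(* The B-rules (eta for mu, and the renaming rule [a]mu b.c -> c[b := a])
   are postponable after the A-rules: whenever t ->B u ->A v, there is w with
   t ->A w ->AB* v (postpone_B_A).  Since every B-step decreases the size of
   a term, an infinite AB-reduction from t would then yield an infinite
   A-reduction; the final argument is an induction on SN_A of t, nested with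
   an induction on the size of B*-reducts of t. *)
From Stdlib Require Import Arith Lia FunctionalExtensionality.

Lemma term_cmd_ind (P : term -> Prop)
  (HV : forall x, P (Var x))
  (HL : forall r u, P u -> P (Lam r u))
  (HA : forall u v, P u -> P v -> P (App u v))
  (HM : forall r a u, P u -> P (Mu r (Cmd a u)))
  (HZ : P Zero)
  (HS : forall u, P u -> P (Suc u))
  (HN : forall r a b u, P a -> P b -> P u -> P (Nrec r a b u)) :
  forall t, P t.
Proof.
  fix IH 1. intros [x|r u|u v|r [a u]| |u|r a b u].
  - apply HV.
  - apply HL, IH.
  - apply HA; apply IH.
  - apply HM, IH.
  - apply HZ.
  - apply HS, IH.
  - apply HN; apply IH.
Qed.

Definition ren (f : nat -> nat) : msig := fun i => (f i, Hole).
Arguments ren f i /.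

Definition up_ren (f : nat -> nat) : nat -> nat :=
  fun i => match i with 0 => 0 | S i => S (f i) end.

Definition shift_from (k : nat) : nat -> nat := fun i => if i <? k then i else S i.

Definition rename_top (a : nat) : nat -> nat :=
  fun i => match i with 0 => a | S i => i end.

Fixpoint msub_ctx (s : msig) (E : ctx) : ctx :=
  match E with
  | Hole => Hole
  | CApp E t => CApp (msub_ctx s E) (msub s t)
  | CSuc E => CSuc (msub_ctx s E)
  | CNrec r a b E => CNrec r (msub s a) (msub s b) (msub_ctx s E)
  end.

Fixpoint ctx_comp (F G : ctx) : ctx :=
  match F with
  | Hole => G
  | CApp F t => CApp (ctx_comp F G) t
  | CSuc F => CSuc (ctx_comp F G)
  | CNrec r a b F => CNrec r a b (ctx_comp F G)
  end.

(* Composition of structural substitutions: first t, then s. *)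
Definition msig_comp (s t : msig) : msig :=
  fun i => let (j, E) := t i in let (k, F) := s j in (k, ctx_comp F (msub_ctx s E)).

Definition lam_lift_msig (k : nat) (s : msig) : msig :=
  fun i => let (j, E) := s i in (j, lift_lam_ctx k E).

Definition ren_msig (f : nat -> nat) (s : msig) : msig :=
  fun i => let (j, E) := s i in (f j, msub_ctx (ren f) E).

Lemma up_mu_ren f : up_mu (ren f) = ren (up_ren f).
Proof. apply functional_extensionality; intros [|i]; reflexivity. Qed.

Lemma up_lam_ren f : up_lam (ren f) = ren f.
Proof. reflexivity. Qed.

Lemma ctx_comp_Hole E : ctx_comp E Hole = E.
Proof. induction E; simpl; congruence. Qed.

Lemma plug_comp F G u : plug (ctx_comp F G) u = plug F (plug G u).
Proof. induction F; simpl; congruence. Qed.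

Lemma msub_plug s E u : msub s (plug E u) = plug (msub_ctx s E) (msub s u).
Proof. induction E; simpl; congruence. Qed.

Lemma lift_lam_plug k E u :
  lift_lam k (plug E u) = plug (lift_lam_ctx k E) (lift_lam k u).
Proof. induction E; simpl; congruence. Qed.

Lemma lift_lam_ctx_comp k F G :
  lift_lam_ctx k (ctx_comp F G) = ctx_comp (lift_lam_ctx k F) (lift_lam_ctx k G).
Proof. induction F; simpl; congruence. Qed.

Lemma lift_mu_ctx_comp k F G :
  lift_mu_ctx k (ctx_comp F G) = ctx_comp (lift_mu_ctx k F) (lift_mu_ctx k G).
Proof. induction F; simpl; congruence. Qed.

Lemma msub_ren_id t : msub (ren (fun i => i)) t = t.
Proof.
  induction t using term_cmd_ind; simpl; rewrite ?up_lam_ren, ?up_mu_ren; try congruence.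
  replace (up_ren (fun i => i)) with (fun i : nat => i) by
    (apply functional_extensionality; intros [|]; reflexivity).
  simpl. congruence.
Qed.

Lemma msub_ctx_ren_id F : msub_ctx (ren (fun i => i)) F = F.
Proof. induction F; simpl; rewrite ?msub_ren_id; congruence. Qed.

Lemma msub_after_ren t : forall s f, msub s (msub (ren f) t) = msub (fun i => s (f i)) t.
Proof.
  induction t using term_cmd_ind; intros s f; simpl; try (f_equal; eauto; fail).
  - rewrite up_lam_ren, IHt. reflexivity.
  - rewrite up_mu_ren. simpl.
    assert (Hup : (fun i => up_mu s (up_ren f i)) = up_mu (fun i => s (f i)))
      by (apply functional_extensionality; intros [|]; reflexivity).
    rewrite IHt, Hup.
    change (up_mu s (up_ren f a)) with ((fun i => up_mu s (up_ren f i)) a).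
    rewrite Hup. reflexivity.
Qed.

Lemma msub_ctx_after_ren F s f :
  msub_ctx s (msub_ctx (ren f) F) = msub_ctx (fun i => s (f i)) F.
Proof. induction F; simpl; rewrite ?msub_after_ren; congruence. Qed.

Lemma lift_mu_as_ren t : forall k, lift_mu k t = msub (ren (shift_from k)) t.
Proof.
  induction t using term_cmd_ind; intros k; simpl; try (f_equal; eauto; fail).
  rewrite up_mu_ren. simpl. rewrite IHt.
  replace (up_ren (shift_from k)) with (shift_from (S k)); [reflexivity|].
  apply functional_extensionality; intros [|i]; unfold shift_from, up_ren; simpl; auto.
  destruct (Nat.ltb_spec i k), (Nat.ltb_spec (S i) (S k)); lia.
Qed.

Lemma lift_mu0_as_ren t : lift_mu 0 t = msub (ren S) t.
Proof. apply lift_mu_as_ren. Qed.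

Lemma lift_mu0_ctx_as_ren E : lift_mu_ctx 0 E = msub_ctx (ren S) E.
Proof. induction E; simpl; rewrite ?lift_mu0_as_ren; congruence. Qed.

Lemma lift_lam_lift_mu t : forall k j, lift_lam k (lift_mu j t) = lift_mu j (lift_lam k t).
Proof. induction t using term_cmd_ind; intros; simpl; f_equal; auto. f_equal; auto. Qed.

Lemma lift_lam_lift_mu_ctx E k j :
  lift_lam_ctx k (lift_mu_ctx j E) = lift_mu_ctx j (lift_lam_ctx k E).
Proof. induction E; simpl; rewrite ?lift_lam_lift_mu; congruence. Qed.

Lemma lift_lam_lift_lam t : forall j k, j <= k ->
  lift_lam (S k) (lift_lam j t) = lift_lam j (lift_lam k t).
Proof.
  induction t using term_cmd_ind; intros j k Hjk; simpl; try (f_equal; eauto; fail).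
  - f_equal. repeat (match goal with |- context [?a <? ?b] => destruct (Nat.ltb_spec a b) end;
      simpl); lia.
  - f_equal. apply IHt. lia.
  - f_equal. f_equal. auto.
Qed.

Lemma lift_lam_lift_lam_ctx E j k : j <= k ->
  lift_lam_ctx (S k) (lift_lam_ctx j E) = lift_lam_ctx j (lift_lam_ctx k E).
Proof. intros H; induction E; simpl; rewrite ?lift_lam_lift_lam by exact H; congruence. Qed.

Lemma msub_lift_lam t : forall s k,
  msub (lam_lift_msig k s) (lift_lam k t) = lift_lam k (msub s t).
Proof.
  induction t using term_cmd_ind; intros s k; simpl; try (f_equal; eauto; fail).
  - f_equal. rewrite <- IHt. f_equal.
    apply functional_extensionality; intros i; unfold lam_lift_msig, up_lam.
    destruct (s i). rewrite lift_lam_lift_lam_ctx by lia. reflexivity.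
  - f_equal.
    replace (up_mu (lam_lift_msig k s)) with (lam_lift_msig k (up_mu s)).
    + unfold lam_lift_msig at 1. destruct (up_mu s a) as [b F].
      simpl. rewrite IHt, lift_lam_plug. reflexivity.
    + apply functional_extensionality; intros [|i]; unfold lam_lift_msig, up_mu; simpl; auto.
      destruct (s i). rewrite lift_lam_lift_mu_ctx. reflexivity.
Qed.

Lemma ren_lift_lam t f k : msub (ren f) (lift_lam k t) = lift_lam k (msub (ren f) t).
Proof. exact (msub_lift_lam t (ren f) k). Qed.

Lemma ren_lift_lam_ctx E f :
  msub_ctx (ren f) (lift_lam_ctx 0 E) = lift_lam_ctx 0 (msub_ctx (ren f) E).
Proof. induction E; simpl; rewrite ?ren_lift_lam; congruence. Qed.

Lemma up_lam_lift_lam x s : msub (up_lam s) (lift_lam 0 x) = lift_lam 0 (msub s x).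
Proof. exact (msub_lift_lam x s 0). Qed.

Lemma up_lam_lift_lam_ctx E s :
  msub_ctx (up_lam s) (lift_lam_ctx 0 E) = lift_lam_ctx 0 (msub_ctx s E).
Proof. induction E; simpl; rewrite ?up_lam_lift_lam; congruence. Qed.

Lemma up_ren_lift_mu x f : msub (ren (up_ren f)) (lift_mu 0 x) = lift_mu 0 (msub (ren f) x).
Proof. rewrite !lift_mu0_as_ren, !msub_after_ren. reflexivity. Qed.

Lemma up_ren_lift_mu_ctx E f :
  msub_ctx (ren (up_ren f)) (lift_mu_ctx 0 E) = lift_mu_ctx 0 (msub_ctx (ren f) E).
Proof. induction E; simpl; rewrite ?up_ren_lift_mu; congruence. Qed.

Lemma ren_after_msub t : forall s f, msub (ren f) (msub s t) = msub (ren_msig f s) t.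
Proof.
  induction t using term_cmd_ind; intros s f; simpl; try (f_equal; eauto; fail).
  - replace (up_lam (ren_msig f s)) with (ren_msig f (up_lam s)).
    + rewrite up_lam_ren, IHt. reflexivity.
    + apply functional_extensionality; intros i; unfold ren_msig, up_lam.
      destruct (s i). rewrite ren_lift_lam_ctx. reflexivity.
  - rewrite up_mu_ren.
    replace (up_mu (ren_msig f s)) with (ren_msig (up_ren f) (up_mu s)).
    + destruct (up_mu s a) as [b E] eqn:Ha. simpl.
      rewrite msub_plug, IHt. unfold ren_msig at 2. rewrite Ha. reflexivity.
    + apply functional_extensionality; intros [|i]; unfold ren_msig, up_mu; simpl; auto.
      destruct (s i). rewrite up_ren_lift_mu_ctx. reflexivity.
Qed.

Lemma up_mu_lift_mu x s : msub (up_mu s) (lift_mu 0 x) = lift_mu 0 (msub s x).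
Proof.
  rewrite !lift_mu0_as_ren, msub_after_ren, ren_after_msub. f_equal.
  apply functional_extensionality; intros i; unfold ren_msig, up_mu.
  destruct (s i). rewrite lift_mu0_ctx_as_ren. reflexivity.
Qed.

Lemma up_mu_lift_mu_ctx E s :
  msub_ctx (up_mu s) (lift_mu_ctx 0 E) = lift_mu_ctx 0 (msub_ctx s E).
Proof. induction E; simpl; rewrite ?up_mu_lift_mu; congruence. Qed.

Lemma up_lam_comp s t : up_lam (msig_comp s t) = msig_comp (up_lam s) (up_lam t).
Proof.
  apply functional_extensionality; intros i; unfold msig_comp, up_lam.
  destruct (t i) as [j E]; destruct (s j) as [k F].
  rewrite lift_lam_ctx_comp, <- up_lam_lift_lam_ctx. reflexivity.
Qed.

Lemma up_mu_comp s t : up_mu (msig_comp s t) = msig_comp (up_mu s) (up_mu t).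
Proof.
  apply functional_extensionality; intros [|i]; unfold msig_comp; simpl; auto.
  destruct (t i) as [j E]; simpl; destruct (s j) as [k F]; simpl.
  rewrite lift_mu_ctx_comp, up_mu_lift_mu_ctx. reflexivity.
Qed.

Lemma msub_comp x : forall s t, msub s (msub t x) = msub (msig_comp s t) x.
Proof.
  induction x using term_cmd_ind; intros s t; simpl; try (f_equal; eauto; fail).
  - rewrite IHx, up_lam_comp. reflexivity.
  - rewrite up_mu_comp. unfold msig_comp at 1.
    destruct (up_mu t a) as [j E]. simpl. destruct (up_mu s j) as [k F].
    rewrite msub_plug, IHx, <- plug_comp. reflexivity.
Qed.

Lemma msub_c_comp c s t : msub_c s (msub_c t c) = msub_c (msig_comp s t) c.
Proof.
  destruct c as [a u]. simpl. unfold msig_comp at 1. destruct (t a) as [j E]. simpl.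
  destruct (s j) as [k F]. rewrite msub_plug, msub_comp, plug_comp. reflexivity.
Qed.

Lemma msub_ext_free t : forall s u,
  (forall i, mfree i t = true -> s i = u i) -> msub s t = msub u t.
Proof.
  induction t using term_cmd_ind; intros s u H; simpl in *; auto.
  - f_equal. apply IHt. intros i Hi. unfold up_lam. rewrite H by auto. reflexivity.
  - f_equal; [apply IHt1|apply IHt2]; intros i Hi; apply H; rewrite Hi; auto with bool.
  - assert (Hup : forall i, mfree i t = true -> up_mu s i = up_mu u i).
    { intros [|i] Hi; simpl; auto. rewrite H; auto. rewrite Hi. auto with bool. }
    assert (Ha : up_mu s a = up_mu u a).
    { destruct a as [|a]; simpl; auto. rewrite H; auto. rewrite Nat.eqb_refl. auto. }
    rewrite Ha. destruct (up_mu u a). rewrite (IHt _ _ Hup). reflexivity.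
  - f_equal; auto.
  - f_equal; [apply IHt1|apply IHt2|apply IHt3]; intros i Hi; apply H; rewrite Hi;
      auto with bool; rewrite Bool.orb_true_r; auto.
Qed.

Lemma sig_rename_as_ren a : sig_rename a = ren (rename_top a).
Proof. apply functional_extensionality; intros [|]; reflexivity. Qed.

Lemma mfree_lift_mu t : forall k, mfree k (lift_mu k t) = false.
Proof.
  induction t using term_cmd_ind; intros k; simpl; auto;
    rewrite ?IHt, ?IHt1, ?IHt2, ?IHt3; auto.
  rewrite Bool.orb_false_r. destruct (Nat.ltb_spec a (S k)); apply Nat.eqb_neq; lia.
Qed.

Lemma rename_lift_mu x a : msub (sig_rename a) (lift_mu 0 x) = x.
Proof. rewrite sig_rename_as_ren, lift_mu0_as_ren, msub_after_ren. apply msub_ren_id. Qed.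

Lemma rename_lift_mu_ctx F a : msub_ctx (sig_rename a) (lift_mu_ctx 0 F) = F.
Proof. induction F; simpl; rewrite ?rename_lift_mu; congruence. Qed.

Lemma not_mfree_lifted u : mfree 0 u = false -> u = lift_mu 0 (msub (sig_rename 0) u).
Proof.
  intros H. rewrite sig_rename_as_ren, lift_mu0_as_ren, ren_after_msub.
  rewrite <- (msub_ren_id u) at 1. apply msub_ext_free.
  intros [|i] Hi; [congruence | reflexivity].
Qed.

Lemma ren_subst t : forall f k r,
  msub (ren f) (subst k r t) = subst k (msub (ren f) r) (msub (ren f) t).
Proof.
  induction t using term_cmd_ind; intros f k r0; simpl; try (f_equal; eauto; fail).
  - destruct (x =? k); auto. destruct (k <? x); auto.
  - rewrite up_lam_ren, IHt, ren_lift_lam. reflexivity.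
  - rewrite up_mu_ren. simpl. rewrite IHt, up_ren_lift_mu. reflexivity.
Qed.

Lemma msub_numeral s n : msub s (numeral n) = numeral n.
Proof. induction n; simpl; congruence. Qed.

Lemma ren_numeral_inv f x n : msub (ren f) x = numeral n -> x = numeral n.
Proof.
  revert x; induction n; intros x H; destruct x; simpl in H; try discriminate; auto.
  injection H; intros; simpl; f_equal; auto.
Qed.

Scheme step_min := Minimality for step Sort Prop
  with cstep_min := Minimality for cstep Sort Prop.

Lemma step_cmd_ind (R : term -> term -> Prop) (Rc : cmd -> cmd -> Prop)
  (P : term -> term -> Prop)
  (Hb : forall t t', R t t' -> P t t')
  (Hl : forall r u u', step R Rc u u' -> P u u' -> P (Lam r u) (Lam r u'))
  (Hal : forall u u' v, step R Rc u u' -> P u u' -> P (App u v) (App u' v))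
  (Har : forall u v v', step R Rc v v' -> P v v' -> P (App u v) (App u v'))
  (Hmb : forall r a u c', Rc (Cmd a u) c' -> P (Mu r (Cmd a u)) (Mu r c'))
  (Hmc : forall r a u u', step R Rc u u' -> P u u' ->
     P (Mu r (Cmd a u)) (Mu r (Cmd a u')))
  (Hs : forall u u', step R Rc u u' -> P u u' -> P (Suc u) (Suc u'))
  (Hn1 : forall r a a' b u, step R Rc a a' -> P a a' ->
     P (Nrec r a b u) (Nrec r a' b u))
  (Hn2 : forall r a b b' u, step R Rc b b' -> P b b' ->
     P (Nrec r a b u) (Nrec r a b' u))
  (Hn3 : forall r a b u u', step R Rc u u' -> P u u' ->
     P (Nrec r a b u) (Nrec r a b u')) :
  forall t t', step R Rc t t' -> P t t'.
Proof.
  intros t t' H.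
  apply (step_min R Rc P (fun c c' => forall r, P (Mu r c) (Mu r c'))); auto.
  intros [a u] c' Hc r. auto.
Qed.

Inductive star (R : term -> term -> Prop) : term -> term -> Prop :=
| star_refl : forall x, star R x x
| star_step : forall x y z, R x y -> star R y z -> star R x z.

Lemma star_one (R : term -> term -> Prop) x y : R x y -> star R x y.
Proof. intros; econstructor; eauto; constructor. Qed.

Lemma star_trans (R : term -> term -> Prop) x y z :
  star R x y -> star R y z -> star R x z.
Proof. induction 1; intros; eauto using star. Qed.

Lemma star_cong (R : term -> term -> Prop) (g : term -> term) :
  (forall x y, R x y -> R (g x) (g y)) -> forall x y, star R x y -> star R (g x) (g y).
Proof. intros Hg x y H; induction H; eauto using star. Qed.

Lemma star_incl (R R' : term -> term -> Prop) :
  (forall x y, R x y -> R' x y) -> forall x y, star R x y -> star R' x y.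
Proof. intros Hg x y H; induction H; eauto using star. Qed.

Lemma step_plug R Rc E x y : step R Rc x y -> step R Rc (plug E x) (plug E y).
Proof. intros H; induction E; simpl; auto using step. Qed.

Notation ABstar := (star redAB).
Notation Bstar := (star redB).
Notation Astar := (star redA).

Lemma A_AB x y : redA x y -> ABstar x y.
Proof. intros; apply star_one; left; auto. Qed.

Lemma B_AB x y : redB x y -> ABstar x y.
Proof. intros; apply star_one; right; auto. Qed.

Lemma Astar_ABstar x y : Astar x y -> ABstar x y.
Proof. apply star_incl. intros; left; auto. Qed.

Lemma Bstar_ABstar x y : Bstar x y -> ABstar x y.
Proof. apply star_incl. intros; right; auto. Qed.

(* Lifts a many-step reduction (of A, B or AB) through the one-hole
   context g; the side condition that g preserves a single step is routine. *)
Ltac cong g :=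
  apply (star_cong _ g); [ let Hn := fresh "Hn" in intros ? ? Hn;
    unfold redAB, redA, redB in Hn |- *;
    first [ destruct Hn as [Hn|Hn]; [left|right]; eauto 7 using step, cstep, step_plug
          | eauto 7 using step, cstep, step_plug ] | ].

Lemma invA_Var x v : ~ redA (Var x) v.
Proof. intros H; inversion H; subst. match goal with h : ruleA _ _ |- _ => inversion h end. Qed.

Lemma invA_Zero v : ~ redA Zero v.
Proof. intros H; inversion H; subst. match goal with h : ruleA _ _ |- _ => inversion h end. Qed.

Lemma invA_Lam r u v : redA (Lam r u) v -> exists u', redA u u' /\ v = Lam r u'.
Proof.
  intros H; inversion H; subst; eauto.
  match goal with h : ruleA _ _ |- _ => inversion h end.
Qed.

Lemma invA_Mu r a u v : redA (Mu r (Cmd a u)) v -> exists u', redA u u' /\ v = Mu r (Cmd a u').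
Proof.
  intros H; inversion H; subst.
  - match goal with h : ruleA _ _ |- _ => inversion h end.
  - match goal with h : cstep _ _ _ _ |- _ => inversion h; subst end.
    + match goal with h : ruleA_c _ _ |- _ => inversion h end.
    + eauto.
Qed.

Lemma invA_App x y v : redA (App x y) v ->
  ruleA (App x y) v \/ (exists x', redA x x' /\ v = App x' y) \/
  (exists y', redA y y' /\ v = App x y').
Proof. intros H; inversion H; subst; eauto. Qed.

Lemma invA_Suc x v : redA (Suc x) v -> ruleA (Suc x) v \/ (exists x', redA x x' /\ v = Suc x').
Proof. intros H; inversion H; subst; eauto. Qed.

Lemma invA_Nrec p a b x v : redA (Nrec p a b x) v ->
  ruleA (Nrec p a b x) v \/ (exists a', redA a a' /\ v = Nrec p a' b x)
  \/ (exists b', redA b b' /\ v = Nrec p a b' x) \/ (exists x', redA x x' /\ v = Nrec p a b x').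
Proof. intros H; inversion H; subst; eauto 7. Qed.

Lemma eta_intro r x : ruleB (Mu r (Cmd 0 (lift_mu 0 x))) x.
Proof.
  pose proof (rB_eta r (lift_mu 0 x) (mfree_lift_mu x 0)) as H.
  rewrite rename_lift_mu in H. exact H.
Qed.

Lemma eta_step q x : redB (Mu q (Cmd 0 (lift_mu 0 x))) x.
Proof. apply st_base, eta_intro. Qed.

Lemma eta_inv t t' : ruleB t t' -> exists r x, t = Mu r (Cmd 0 (lift_mu 0 x)) /\ t' = x.
Proof.
  intros [r u Hf]. exists r, (msub (sig_rename 0) u).
  split; auto. rewrite <- not_mfree_lifted; auto.
Qed.

Lemma invB_Lam x r b : redB x (Lam r b) ->
  (exists q, x = Mu q (Cmd 0 (lift_mu 0 (Lam r b)))) \/ (exists b0, x = Lam r b0 /\ redB b0 b).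
Proof.
  intros H; inversion H; subst; eauto.
  match goal with h : ruleB _ _ |- _ => apply eta_inv in h; destruct h as [q [y [-> ->]]] end.
  eauto.
Qed.

Lemma invB_Mu x r c : redB x (Mu r c) ->
  (exists q, x = Mu q (Cmd 0 (lift_mu 0 (Mu r c)))) \/
  (exists c0, x = Mu r c0 /\ cstep ruleB ruleB_c c0 c).
Proof.
  intros H; inversion H; subst; eauto.
  match goal with h : ruleB _ _ |- _ => apply eta_inv in h; destruct h as [q [y [-> ->]]] end.
  eauto.
Qed.

Lemma invB_Zero x : redB x Zero -> exists q, x = Mu q (Cmd 0 (lift_mu 0 Zero)).
Proof.
  intros H; inversion H; subst.
  match goal with h : ruleB _ _ |- _ => apply eta_inv in h; destruct h as [q [y [-> ->]]] end.
  eauto.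
Qed.

Lemma invB_Suc x y : redB x (Suc y) ->
  (exists q, x = Mu q (Cmd 0 (lift_mu 0 (Suc y)))) \/ (exists x0, x = Suc x0 /\ redB x0 y).
Proof.
  intros H; inversion H; subst; eauto.
  match goal with h : ruleB _ _ |- _ => apply eta_inv in h; destruct h as [q [z [-> ->]]] end.
  eauto.
Qed.

Lemma redB_ren t t' : redB t t' -> forall f, redB (msub (ren f) t) (msub (ren f) t').
Proof.
  intros H; pattern t, t'; eapply (step_cmd_ind ruleB ruleB_c); [ .. | exact H];
    clear H t t'; unfold redB in *; intros; simpl; rewrite ?up_lam_ren, ?up_mu_ren; simpl;
    eauto using step, cstep.
  - apply eta_inv in H as [r [x [-> ->]]]. simpl. rewrite up_mu_ren. simpl.
    rewrite up_ren_lift_mu. apply eta_step.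
  - inversion H; subst. simpl. rewrite up_mu_ren. simpl. apply st_mu, cst_base.
    replace (msub_c (ren (up_ren f)) (msub_c (sig_rename a) c))
      with (msub_c (sig_rename (up_ren f a)) (msub_c (ren (up_ren (up_ren f))) c));
      [apply rB_mumu|].
    rewrite !sig_rename_as_ren, !msub_c_comp. f_equal.
    apply functional_extensionality; intros [|i]; reflexivity.
Qed.

Lemma redB_lift_lam t t' : redB t t' -> forall k, redB (lift_lam k t) (lift_lam k t').
Proof.
  intros H; pattern t, t'; eapply (step_cmd_ind ruleB ruleB_c); [ .. | exact H];
    clear H t t'; unfold redB in *; intros; simpl; eauto using step, cstep.
  - apply eta_inv in H as [r [x [-> ->]]]. simpl. rewrite lift_lam_lift_mu. apply eta_step.
  - inversion H; subst. simpl. apply st_mu, cst_base.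
    replace (lift_lam_c k (msub_c (sig_rename a) c))
      with (msub_c (sig_rename a) (lift_lam_c k c)); [apply rB_mumu|].
    destruct c; simpl. rewrite sig_rename_as_ren, ren_lift_lam. reflexivity.
Qed.

Lemma redB_subst t t' : redB t t' -> forall k r, redB (subst k r t) (subst k r t').
Proof.
  intros H; pattern t, t'; eapply (step_cmd_ind ruleB ruleB_c); [ .. | exact H];
    clear H t t'; unfold redB in *; intros; simpl; eauto using step, cstep.
  - apply eta_inv in H as [q [x [-> ->]]]. simpl.
    rewrite !lift_mu0_as_ren, <- ren_subst, <- lift_mu0_as_ren. apply eta_step.
  - inversion H; subst. simpl. apply st_mu, cst_base.
    replace (subst_c k (lift_mu 0 r0) (msub_c (sig_rename a) c))
      with (msub_c (sig_rename a) (subst_c k (lift_mu 0 (lift_mu 0 r0)) c));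
      [apply rB_mumu|].
    rewrite !sig_rename_as_ren. destruct c; simpl.
    rewrite ren_subst, <- sig_rename_as_ren, rename_lift_mu. reflexivity.
Qed.

Lemma lift_mu0_Bstar x y : Bstar x y -> Bstar (lift_mu 0 x) (lift_mu 0 y).
Proof.
  apply (star_cong _ (lift_mu 0)). intros. rewrite !lift_mu0_as_ren. apply redB_ren; auto.
Qed.

Lemma lift_lam0_Bstar x y : Bstar x y -> Bstar (lift_lam 0 x) (lift_lam 0 y).
Proof. apply (star_cong _ (lift_lam 0)). intros; apply redB_lift_lam; auto. Qed.

Lemma subst_redB_arg t : forall k r r', redB r r' -> Bstar (subst k r t) (subst k r' t).
Proof.
  induction t using term_cmd_ind; intros k r0 r0' H; simpl.
  - destruct (x =? k); [apply star_one; auto | apply star_refl].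
  - cong (Lam r). apply IHt. apply redB_lift_lam. auto.
  - eapply star_trans.
    + cong (fun x => App x (subst k r0 t2)). eauto.
    + cong (fun x => App (subst k r0' t1) x). eauto.
  - cong (fun x => Mu r (Cmd a x)). apply IHt. rewrite !lift_mu0_as_ren. apply redB_ren. auto.
  - apply star_refl.
  - cong Suc. eauto.
  - eapply star_trans; [|eapply star_trans].
    + cong (fun x => Nrec r x (subst k r0 t2) (subst k r0 t3)). eauto.
    + cong (fun x => Nrec r (subst k r0' t1) x (subst k r0 t3)). eauto.
    + cong (fun x => Nrec r (subst k r0' t1) (subst k r0' t2) x). eauto.
Qed.

Inductive ctx_Bstar : ctx -> ctx -> Prop :=
| cB_hole : ctx_Bstar Hole Hole
| cB_app : forall E E' t t', ctx_Bstar E E' -> Bstar t t' -> ctx_Bstar (CApp E t) (CApp E' t')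
| cB_suc : forall E E', ctx_Bstar E E' -> ctx_Bstar (CSuc E) (CSuc E')
| cB_nrec : forall r a a' b b' E E', ctx_Bstar E E' -> Bstar a a' -> Bstar b b' ->
    ctx_Bstar (CNrec r a b E) (CNrec r a' b' E').

Definition msig_Bstar (s s' : msig) : Prop :=
  forall i, fst (s i) = fst (s' i) /\ ctx_Bstar (snd (s i)) (snd (s' i)).

Lemma ctx_Bstar_plug E E' u u' :
  ctx_Bstar E E' -> Bstar u u' -> Bstar (plug E u) (plug E' u').
Proof.
  intros H Hu; induction H; simpl; auto.
  - eapply star_trans.
    + cong (fun x => App x t). eauto.
    + cong (fun x => App (plug E' u') x). auto.
  - cong Suc. auto.
  - eapply star_trans; [|eapply star_trans].
    + cong (fun x => Nrec r x b (plug E u)). eauto.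
    + cong (fun x => Nrec r a' x (plug E u)). eauto.
    + cong (fun x => Nrec r a' b' x). auto.
Qed.

Lemma msig_Bstar_up_lam s s' : msig_Bstar s s' -> msig_Bstar (up_lam s) (up_lam s').
Proof.
  intros H i. unfold up_lam. specialize (H i). destruct (s i), (s' i). simpl in *.
  destruct H as [Hj HE]; split; auto.
  induction HE; simpl; constructor; auto using lift_lam0_Bstar.
Qed.

Lemma msig_Bstar_up_mu s s' : msig_Bstar s s' -> msig_Bstar (up_mu s) (up_mu s').
Proof.
  intros H [|i]; simpl; [split; auto; constructor|].
  specialize (H i). destruct (s i), (s' i). simpl in *.
  destruct H as [Hj HE]; split; auto.
  induction HE; simpl; constructor; auto using lift_mu0_Bstar.
Qed.

Lemma msub_Bstar t : forall s s', msig_Bstar s s' -> Bstar (msub s t) (msub s' t).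
Proof.
  induction t using term_cmd_ind; intros s s' H; simpl.
  - apply star_refl.
  - cong (Lam r). apply IHt, msig_Bstar_up_lam; auto.
  - eapply star_trans.
    + cong (fun x => App x (msub s t2)). eauto.
    + cong (fun x => App (msub s' t1) x). eauto.
  - pose proof (msig_Bstar_up_mu _ _ H a) as Ha.
    destruct (up_mu s a) as [b E], (up_mu s' a) as [b' E']. simpl in Ha.
    destruct Ha as [-> HE].
    cong (fun x => Mu r (Cmd b' x)). apply ctx_Bstar_plug; auto.
    apply IHt, msig_Bstar_up_mu; auto.
  - apply star_refl.
  - cong Suc. eauto.
  - eapply star_trans; [|eapply star_trans].
    + cong (fun x => Nrec r x (msub s t2) (msub s t3)). eauto.
    + cong (fun x => Nrec r (msub s' t1) x (msub s t3)). eauto.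
    + cong (fun x => Nrec r (msub s' t1) (msub s' t2) x). eauto.
Qed.

Lemma sig_self_Bstar q c E E' :
  ctx_Bstar E E' -> Bstar (Mu q (msub_c (sig_self E) c)) (Mu q (msub_c (sig_self E') c)).
Proof.
  intros HE. destruct c as [a u]. simpl.
  assert (Hs : msig_Bstar (sig_self E) (sig_self E'))
    by (intros [|i]; simpl; split; auto; constructor).
  pose proof (Hs a) as Ha.
  destruct (sig_self E a) as [b F], (sig_self E' a) as [b' F']. simpl in Ha.
  destruct Ha as [-> HF].
  cong (fun x => Mu q (Cmd b' x)). apply ctx_Bstar_plug; auto. apply msub_Bstar; auto.
Qed.

Lemma sig_self_lift_mu x E : msub (sig_self E) (lift_mu 0 x) = lift_mu 0 x.
Proof. rewrite lift_mu0_as_ren, msub_after_ren. reflexivity. Qed.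

Lemma sig_self_lift_mu_ctx F E : msub_ctx (sig_self E) (lift_mu_ctx 0 F) = lift_mu_ctx 0 F.
Proof. induction F; simpl; rewrite ?sig_self_lift_mu; congruence. Qed.

Lemma sig_self_Hole : sig_self Hole = ren (fun i => i).
Proof. apply functional_extensionality; intros [|]; reflexivity. Qed.

Lemma sig_self_comp F E c :
  msub_c (sig_self F) (msub_c (sig_self (lift_mu_ctx 0 E)) c)
  = msub_c (sig_self (ctx_comp F (lift_mu_ctx 0 E))) c.
Proof.
  rewrite msub_c_comp. f_equal.
  apply functional_extensionality; intros [|i]; unfold msig_comp; simpl; auto.
  rewrite sig_self_lift_mu_ctx. reflexivity.
Qed.

Lemma push_ctx_into_mu E : forall r c, exists r',
  Astar (plug E (Mu r c)) (Mu r' (msub_c (sig_self (lift_mu_ctx 0 E)) c)).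
Proof.
  induction E as [|E IHE t|E IHE|p a b E IHE]; intros r c; simpl.
  - exists r. rewrite sig_self_Hole. destruct c as [a u]. simpl.
    rewrite msub_ren_id. apply star_refl.
  - destruct (IHE r c) as [r' H]. exists (cod r').
    eapply star_trans; [cong (fun x => App x t); exact H|].
    apply star_one, st_base.
    pose proof (rA_app_mu r' (msub_c (sig_self (lift_mu_ctx 0 E)) c) t) as Hr.
    rewrite sig_self_comp in Hr. exact Hr.
  - destruct (IHE r c) as [r' H]. exists r'.
    eapply star_trans; [cong Suc; exact H|].
    apply star_one, st_base.
    pose proof (rA_suc_mu r' (msub_c (sig_self (lift_mu_ctx 0 E)) c)) as Hr.
    rewrite sig_self_comp in Hr. exact Hr.
  - destruct (IHE r c) as [r' H]. exists p.
    eapply star_trans; [cong (Nrec p a b); exact H|].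
    apply star_one, st_base.
    pose proof (rA_nrec_mu p a b r' (msub_c (sig_self (lift_mu_ctx 0 E)) c)) as Hr.
    rewrite sig_self_comp in Hr. exact Hr.
Qed.

(* A structural substitution may turn the redex [a](mu b.c) into
   [s a](E[mu b.c']); the A-rules first move E under the binder. *)
Lemma msub_mumu s a q c r :
  ABstar (Mu r (msub_c s (Cmd a (Mu q c)))) (Mu r (msub_c s (msub_c (sig_rename a) c))).
Proof.
  simpl. destruct (s a) as [b E] eqn:Ha.
  destruct (push_ctx_into_mu E q (msub_c (up_mu s) c)) as [r' HP].
  eapply star_trans; [cong (fun x => Mu r (Cmd b x)); apply Astar_ABstar; exact HP|].
  apply B_AB, st_mu, cst_base.
  replace (msub_c s (msub_c (sig_rename a) c))
    with (msub_c (sig_rename b) (msub_c (sig_self (lift_mu_ctx 0 E)) (msub_c (up_mu s) c)));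
    [apply rB_mumu|].
  rewrite !msub_c_comp. f_equal.
  apply functional_extensionality; intros [|i]; unfold msig_comp; simpl.
  - rewrite Ha, !ctx_comp_Hole, rename_lift_mu_ctx. reflexivity.
  - destruct (s i) as [j F]. simpl.
    rewrite (lift_mu0_ctx_as_ren F), msub_ctx_after_ren, ctx_comp_Hole.
    simpl. rewrite <- (msub_ctx_ren_id F) at 2. reflexivity.
Qed.

Lemma redB_msub t t' : redB t t' -> forall s, ABstar (msub s t) (msub s t').
Proof.
  intros H; pattern t, t'; eapply (step_cmd_ind ruleB ruleB_c); [ .. | exact H];
    clear H t t'; intros; simpl.
  - apply eta_inv in H as [r [x [-> ->]]]. simpl. rewrite up_mu_lift_mu.
    apply B_AB, eta_step.
  - cong (Lam r). auto.
  - cong (fun x => App x (msub s v)). auto.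
  - cong (fun x => App (msub s u) x). auto.
  - inversion H; subst. apply msub_mumu.
  - destruct (up_mu s a) as [b E]. cong (fun x => Mu r (Cmd b (plug E x))). auto.
  - cong Suc. auto.
  - cong (fun x => Nrec r x (msub s b) (msub s u)). auto.
  - cong (fun x => Nrec r (msub s a) x (msub s u)). auto.
  - cong (fun x => Nrec r (msub s a) (msub s b) x). auto.
Qed.

Lemma credB_msub c c' : cstep ruleB ruleB_c c c' ->
  forall s q, ABstar (Mu q (msub_c s c)) (Mu q (msub_c s c')).
Proof.
  intros H s q. inversion H as [? ? Hr|a u u' Hu]; subst.
  - inversion Hr; subst. apply msub_mumu.
  - simpl. destruct (s a) as [b E]. cong (fun x => Mu q (Cmd b (plug E x))).
    apply redB_msub. auto.
Qed.

Lemma ren_sig_self f E c :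
  msub_c (ren (up_ren f)) (msub_c (sig_self E) c)
  = msub_c (sig_self (msub_ctx (ren (up_ren f)) E)) (msub_c (ren (up_ren f)) c).
Proof.
  rewrite !msub_c_comp. f_equal.
  apply functional_extensionality; intros [|i]; unfold msig_comp; simpl; auto.
  rewrite ctx_comp_Hole. reflexivity.
Qed.

Lemma redA_ren t t' : redA t t' -> forall f, redA (msub (ren f) t) (msub (ren f) t').
Proof.
  intros H; pattern t, t'; eapply (step_cmd_ind ruleA ruleA_c); [ .. | exact H];
    clear H t t'; unfold redA in *; intros; simpl; rewrite ?up_lam_ren, ?up_mu_ren; simpl;
    eauto using step, cstep.
  - apply st_base. inversion H; subst; simpl; rewrite ?up_lam_ren, ?up_mu_ren.
    + rewrite ren_subst. apply rA_beta.
    + rewrite ren_sig_self. apply rA_suc_mu.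
    + rewrite ren_sig_self. simpl. rewrite up_ren_lift_mu. apply rA_app_mu.
    + apply rA_nrec_0.
    + rewrite msub_numeral. apply rA_nrec_S.
    + rewrite ren_sig_self. simpl. rewrite !up_ren_lift_mu. apply rA_nrec_mu.
  - inversion H.
Qed.

Lemma redA_ren_reflect t : forall f v,
  redA (msub (ren f) t) v -> exists t', redA t t' /\ v = msub (ren f) t'.
Proof.
  induction t using term_cmd_ind; intros f v H; simpl in H.
  - exfalso; eapply invA_Var; eauto.
  - apply invA_Lam in H as [u' [Hu ->]].
    destruct (IHt _ _ Hu) as [t1 [Ht1 ->]]. exists (Lam r t1).
    split; [apply st_lam; auto | reflexivity].
  - apply invA_App in H as [Hr | [[x' [Hx ->]] | [y' [Hy ->]]]].
    + destruct t1; simpl in Hr; inversion Hr; subst.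
      * exists (subst 0 t2 t1). split; [apply st_base, rA_beta|].
        rewrite ren_subst. reflexivity.
      * exists (Mu (cod t) (msub_c (sig_self (CApp Hole (lift_mu 0 t2))) c)).
        split; [apply st_base, rA_app_mu|].
        simpl. rewrite up_mu_ren, ren_sig_self. simpl. rewrite up_ren_lift_mu. reflexivity.
    + destruct (IHt1 _ _ Hx) as [t1' [H1 ->]]. exists (App t1' t2).
      split; [apply st_appl; auto | reflexivity].
    + destruct (IHt2 _ _ Hy) as [t2' [H2 ->]]. exists (App t1 t2').
      split; [apply st_appr; auto | reflexivity].
  - rewrite up_mu_ren in H. simpl in H. apply invA_Mu in H as [u' [Hu ->]].
    destruct (IHt _ _ Hu) as [t1 [Ht1 ->]]. exists (Mu r (Cmd a t1)).
    split; [apply st_mu, cst_cmd; auto|]. simpl. rewrite up_mu_ren. reflexivity.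
  - exfalso; eapply invA_Zero; eauto.
  - apply invA_Suc in H as [Hr | [x' [Hx ->]]].
    + destruct t; simpl in Hr; inversion Hr; subst.
      exists (Mu t (msub_c (sig_self (CSuc Hole)) c)). split; [apply st_base, rA_suc_mu|].
      simpl. rewrite up_mu_ren, ren_sig_self. reflexivity.
    + destruct (IHt _ _ Hx) as [t1 [H1 ->]]. exists (Suc t1).
      split; [apply st_suc; auto | reflexivity].
  - apply invA_Nrec in H as [Hr | [[x' [Hx ->]] | [[x' [Hx ->]] | [x' [Hx ->]]]]].
    + destruct t3; simpl in Hr; inversion Hr; subst.
      * exists (Mu r (msub_c (sig_self (CNrec r (lift_mu 0 t1) (lift_mu 0 t2) Hole)) c)).
        split; [apply st_base, rA_nrec_mu|].
        simpl. rewrite up_mu_ren, ren_sig_self. simpl. rewrite !up_ren_lift_mu. reflexivity.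
      * exists t1. split; [apply st_base, rA_nrec_0 | reflexivity].
      * match goal with h : numeral _ = msub _ _ |- _ =>
          symmetry in h; apply ren_numeral_inv in h end. subst.
        exists (App (App t2 (numeral n)) (Nrec r t1 t2 (numeral n))).
        split; [apply st_base, rA_nrec_S|]. simpl. rewrite msub_numeral. reflexivity.
    + destruct (IHt1 _ _ Hx) as [y [Hy ->]]. exists (Nrec r y t2 t3).
      split; [apply st_nrec1; auto | reflexivity].
    + destruct (IHt2 _ _ Hx) as [y [Hy ->]]. exists (Nrec r t1 y t3).
      split; [apply st_nrec2; auto | reflexivity].
    + destruct (IHt3 _ _ Hx) as [y [Hy ->]]. exists (Nrec r t1 t2 y).
      split; [apply st_nrec3; auto | reflexivity].
Qed.

Lemma eta_then_rule q x v : ruleA x v -> ABstar (Mu q (Cmd 0 (lift_mu 0 x))) v.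
Proof. intros H. eapply star_step; [right; apply eta_step | apply A_AB, st_base, H]. Qed.

Lemma eta_app q x s :
  redA (App (Mu q (Cmd 0 (lift_mu 0 x))) s) (Mu (cod q) (Cmd 0 (lift_mu 0 (App x s)))).
Proof.
  pose proof (rA_app_mu q (Cmd 0 (lift_mu 0 x)) s) as H.
  simpl in H. rewrite sig_self_lift_mu in H. apply st_base, H.
Qed.

Lemma eta_suc q x : redA (Suc (Mu q (Cmd 0 (lift_mu 0 x)))) (Mu q (Cmd 0 (lift_mu 0 (Suc x)))).
Proof.
  pose proof (rA_suc_mu q (Cmd 0 (lift_mu 0 x))) as H.
  simpl in H. rewrite sig_self_lift_mu in H. apply st_base, H.
Qed.

Lemma eta_nrec p a b q x :
  redA (Nrec p a b (Mu q (Cmd 0 (lift_mu 0 x)))) (Mu p (Cmd 0 (lift_mu 0 (Nrec p a b x)))).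
Proof.
  pose proof (rA_nrec_mu p a b q (Cmd 0 (lift_mu 0 x))) as H.
  simpl in H. rewrite sig_self_lift_mu in H. apply st_base, H.
Qed.

(* A B-expansion x of a numeral: one A-step moves the eta-expansion
   surrounding a subterm of x out to the successor, where a B-step removes it. *)
Lemma suc_B_expanded_numeral n : forall x, redB x (numeral n) ->
  exists X, redA (Suc x) X /\ redB X (Suc (numeral n)).
Proof.
  induction n as [|n IHn]; intros x H; simpl in *.
  - apply invB_Zero in H as [q ->]. eexists. split; [apply eta_suc | apply eta_step].
  - apply invB_Suc in H as [[q ->] | [x0 [-> H0]]].
    + eexists. split; [apply eta_suc | apply eta_step].
    + destruct (IHn _ H0) as [X [HA HB]]. exists (Suc X). split; apply st_suc; auto.
Qed.

Lemma postpone_eta q x v : redA x v ->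
  exists w, redA (Mu q (Cmd 0 (lift_mu 0 x))) w /\ ABstar w v.
Proof.
  intros H. exists (Mu q (Cmd 0 (lift_mu 0 v))). split.
  - apply st_mu, cst_cmd. rewrite !lift_mu0_as_ren. apply redA_ren, H.
  - apply B_AB, eta_step.
Qed.

Lemma postpone_mumu r a u c' v : ruleB_c (Cmd a u) c' -> redA (Mu r c') v ->
  exists w, redA (Mu r (Cmd a u)) w /\ ABstar w v.
Proof.
  intros Hr Hv. inversion Hr as [? q [a0 u0]]; subst.
  rewrite sig_rename_as_ren in Hv. simpl in Hv. apply invA_Mu in Hv as [u' [Hu ->]].
  apply redA_ren_reflect in Hu as [u1 [Hu1 ->]].
  exists (Mu r (Cmd a (Mu q (Cmd a0 u1)))). split.
  - apply st_mu, cst_cmd, st_mu, cst_cmd, Hu1.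
  - apply B_AB, st_mu, cst_base.
    replace (Cmd (rename_top a a0) (msub (ren (rename_top a)) u1))
      with (msub_c (sig_rename a) (Cmd a0 u1)); [apply rB_mumu|].
    rewrite sig_rename_as_ren. reflexivity.
Qed.

Lemma postpone_app_fun u u' s v : redB u u' -> ruleA (App u' s) v ->
  exists w, redA (App u s) w /\ ABstar w v.
Proof.
  intros Hb Hr. inversion Hr; subst.
  - apply invB_Lam in Hb as [[q ->] | [b0 [-> Hb0]]].
    + eexists. split; [apply eta_app | apply eta_then_rule, Hr].
    + eexists. split; [apply st_base, rA_beta | apply B_AB, redB_subst, Hb0].
  - apply invB_Mu in Hb as [[q ->] | [c0 [-> Hc]]].
    + eexists. split; [apply eta_app | apply eta_then_rule, Hr].
    + eexists. split; [apply st_base, rA_app_mu | apply credB_msub, Hc].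
Qed.

Lemma postpone_app_arg u s s' v : redB s s' -> ruleA (App u s') v ->
  exists w, redA (App u s) w /\ ABstar w v.
Proof.
  intros Hb Hr. inversion Hr; subst.
  - eexists. split; [apply st_base, rA_beta | apply Bstar_ABstar, subst_redB_arg, Hb].
  - eexists. split; [apply st_base, rA_app_mu|].
    apply Bstar_ABstar, sig_self_Bstar. repeat constructor. apply lift_mu0_Bstar, star_one, Hb.
Qed.

Lemma postpone_suc u u' v : redB u u' -> ruleA (Suc u') v ->
  exists w, redA (Suc u) w /\ ABstar w v.
Proof.
  intros Hb Hr. inversion Hr; subst.
  apply invB_Mu in Hb as [[q ->] | [c0 [-> Hc]]].
  - eexists. split; [apply eta_suc | apply eta_then_rule, Hr].
  - eexists. split; [apply st_base, rA_suc_mu | apply credB_msub, Hc].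
Qed.

Lemma postpone_nrec_base p a a' b x v : redB a a' -> ruleA (Nrec p a' b x) v ->
  exists w, redA (Nrec p a b x) w /\ ABstar w v.
Proof.
  intros Hb Hr. inversion Hr; subst.
  - eexists. split; [apply st_base, rA_nrec_0 | apply B_AB, Hb].
  - eexists. split; [apply st_base, rA_nrec_S | apply B_AB, st_appr, st_nrec1, Hb].
  - eexists. split; [apply st_base, rA_nrec_mu|].
    apply Bstar_ABstar, sig_self_Bstar. repeat constructor.
    apply lift_mu0_Bstar, star_one, Hb.
Qed.

Lemma postpone_nrec_step p a b b' x v : redB b b' -> ruleA (Nrec p a b' x) v ->
  exists w, redA (Nrec p a b x) w /\ ABstar w v.
Proof.
  intros Hb Hr. inversion Hr; subst.
  - eexists. split; [apply st_base, rA_nrec_0 | apply star_refl].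
  - eexists. split; [apply st_base, rA_nrec_S|].
    eapply star_trans; apply B_AB; [apply st_appl, st_appl, Hb | apply st_appr, st_nrec2, Hb].
  - eexists. split; [apply st_base, rA_nrec_mu|].
    apply Bstar_ABstar, sig_self_Bstar. repeat constructor.
    apply lift_mu0_Bstar, star_one, Hb.
Qed.

Lemma postpone_nrec_arg p a b x x' v : redB x x' -> ruleA (Nrec p a b x') v ->
  exists w, redA (Nrec p a b x) w /\ ABstar w v.
Proof.
  intros Hb Hr. inversion Hr; subst.
  - apply invB_Zero in Hb as [q1 ->].
    eexists. split; [apply eta_nrec | apply eta_then_rule, Hr].
  - apply invB_Suc in Hb as [[q1 ->] | [y0 [-> Hy0]]].
    + eexists. split; [apply eta_nrec | apply eta_then_rule, Hr].
    + destruct (suc_B_expanded_numeral _ _ Hy0) as [X [HA HB]].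
      exists (Nrec p a b X). split; [apply st_nrec3, HA|].
      eapply star_step; [right; apply st_nrec3, HB | apply A_AB, st_base, Hr].
  - apply invB_Mu in Hb as [[q1 ->] | [c0 [-> Hc]]].
    + eexists. split; [apply eta_nrec | apply eta_then_rule, Hr].
    + eexists. split; [apply st_base, rA_nrec_mu | apply credB_msub, Hc].
Qed.

(* Steps in disjoint positions commute: perform the A-step first (giving w),
   then the B-step. *)
Ltac disjoint w :=
  exists w; split; [unfold redA; eauto using step, cstep
                   | apply B_AB; unfold redB; eauto using step, cstep].

(* An A-step inside the subterm g _ that was B-reduced: use the induction
   hypothesis IH on that subterm and close under the context g. *)
Ltac same_position IH Hx g :=
  destruct (IH _ Hx) as [w [Hw Hs]]; exists (g w);
  split; [unfold redA; eauto using step, cstep | cong g; exact Hs].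

Lemma postpone_B_A t u : redB t u -> forall v, redA u v -> exists w, redA t w /\ ABstar w v.
Proof.
  intros H; pattern t, u; eapply (step_cmd_ind ruleB ruleB_c); [ .. | exact H]; clear H t u.
  - intros t u Hr v Hv. apply eta_inv in Hr as [r [x [-> ->]]]. apply postpone_eta, Hv.
  - intros r u u' Hb IH v Hv. apply invA_Lam in Hv as [u'' [Hu ->]].
    same_position IH Hu (Lam r).
  - intros u u' s Hb IH v Hv.
    apply invA_App in Hv as [Hr | [[x' [Hx ->]] | [y' [Hy ->]]]].
    + eapply postpone_app_fun; eauto.
    + same_position IH Hx (fun z => App z s).
    + disjoint (App u y').
  - intros s u u' Hb IH v Hv.
    apply invA_App in Hv as [Hr | [[x' [Hx ->]] | [y' [Hy ->]]]].
    + eapply postpone_app_arg; eauto.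
    + disjoint (App x' u).
    + same_position IH Hy (App s).
  - intros r a u c' Hr v Hv. eapply postpone_mumu; eauto.
  - intros r a u u' Hb IH v Hv. apply invA_Mu in Hv as [u'' [Hu ->]].
    same_position IH Hu (fun z => Mu r (Cmd a z)).
  - intros u u' Hb IH v Hv. apply invA_Suc in Hv as [Hr | [x' [Hx ->]]].
    + eapply postpone_suc; eauto.
    + same_position IH Hx Suc.
  - intros p a a' b x Hb IH v Hv.
    apply invA_Nrec in Hv as [Hr | [[x' [Hx ->]] | [[x' [Hx ->]] | [x' [Hx ->]]]]].
    + eapply postpone_nrec_base; eauto.
    + same_position IH Hx (fun z => Nrec p z b x).
    + disjoint (Nrec p a x' x).
    + disjoint (Nrec p a b x').
  - intros p a b b' x Hb IH v Hv.
    apply invA_Nrec in Hv as [Hr | [[x' [Hx ->]] | [[x' [Hx ->]] | [x' [Hx ->]]]]].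
    + eapply postpone_nrec_step; eauto.
    + disjoint (Nrec p x' b x).
    + same_position IH Hx (fun z => Nrec p a z x).
    + disjoint (Nrec p a b x').
  - intros p a b x x0 Hb IH v Hv.
    apply invA_Nrec in Hv as [Hr | [[x' [Hx ->]] | [[x' [Hx ->]] | [x' [Hx ->]]]]].
    + eapply postpone_nrec_arg; eauto.
    + disjoint (Nrec p x' b x).
    + disjoint (Nrec p a x' x).
    + same_position IH Hx (Nrec p a b).
Qed.

Lemma postpone_Bstar_A t u : Bstar t u -> forall v, redA u v -> exists w, redA t w /\ ABstar w v.
Proof.
  induction 1 as [t|t u u' Htu Hu IH]; intros v Hv.
  - exists v. split; [exact Hv | apply star_refl].
  - destruct (IH v Hv) as [w1 [H1 H2]].
    destruct (postpone_B_A _ _ Htu w1 H1) as [w [H3 H4]].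
    exists w. split; [exact H3 | eapply star_trans; eauto].
Qed.

Fixpoint size (t : term) : nat :=
  match t with
  | Var _ => 1
  | Lam _ u => S (size u)
  | App u v => S (size u + size v)
  | Mu _ (Cmd _ u) => S (S (size u))
  | Zero => 1
  | Suc u => S (size u)
  | Nrec _ a b u => S (size a + size b + size u)
  end.

Lemma size_ren t : forall f, size (msub (ren f) t) = size t.
Proof.
  induction t using term_cmd_ind; intros f; simpl; rewrite ?up_lam_ren, ?up_mu_ren; simpl; auto.
Qed.

Lemma size_redB t t' : redB t t' -> size t' < size t.
Proof.
  intros H; pattern t, t'; eapply (step_cmd_ind ruleB ruleB_c); [ .. | exact H]; clear H t t';
    intros; simpl; try lia.
  - apply eta_inv in H as [r [x [-> ->]]]. simpl. rewrite lift_mu0_as_ren, size_ren. lia.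
  - inversion H; subst. destruct c as [a0 u0]. rewrite sig_rename_as_ren. simpl.
    rewrite size_ren. lia.
Qed.

Lemma SN_star R t t' : SN R t -> star R t t' -> SN R t'.
Proof.
  intros HS H. induction H as [|x y z Hxy _ IH]; auto.
  apply IH. destruct HS as [x Hx]. auto.
Qed.

Lemma SN_A_Bstar_SN_AB t : SN redA t -> forall u, Bstar t u -> SN redAB u.
Proof.
  induction 1 as [t _ IHA].
  intros u. remember (size u) as n eqn:Hn. revert u Hn.
  induction n as [n IHsize] using lt_wf_ind. intros u Hn Hu.
  constructor. intros u' [HA|HB].
  - destruct (postpone_Bstar_A _ _ Hu _ HA) as [w [Hw Hs]].
    eapply SN_star; [apply (IHA w Hw w), star_refl | exact Hs].
  - apply (IHsize (size u')); [subst; apply size_redB, HB | reflexivity |].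
    eapply star_trans; [exact Hu | apply star_one, HB].
Qed.

Theorem mainTheorem17 : forall t : term, SN redA t -> SN redAB t.
Proof. intros t H. apply (SN_A_Bstar_SN_AB t H t), star_refl. Qed.
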